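(* Let $d>0$, let $\ell$ be a certified lower bound with certificate matrix $\Lambda=[\lambda_1|\cdots|\lambda_m]$, and suppose $f(d,\ell)=1$. Suppose $j\in\{1,\dots,m\}$ satisfies $0<a_j^\top y(d,\ell)-u_j\le\gamma_j(d,\ell)$, and that in addition $-\lambda_j^\top u\ge L_j:=a_j^\top y(d,\ell)-\gamma_j(d,\ell)$. Define $\ell^{(1)}:=\ell-\frac{2(t_j(d,\ell)-v_j(\ell))}{d_j\gamma_j(d,\ell)^2}e_j$ and suppose $f(d,\ell^{(1)})>0$. Define $d^{(1)}:=d/f(d,\ell^{(1)})$, $$\ell^{(2)}:=\ell^{(1)}+\frac{2\big(2v_j(\ell^{(1)})-\gamma_j(d^{(1)},\ell^{(1)})\big)}{(m-1)d^{(1)}_j\gamma_j(d^{(1)},\ell^{(1)})^2+2}e_j,\qquad d^{(2)}:=d^{(1)}+\frac{2}{m-1}\frac{1}{\gamma_j(d^{(1)},\ell^{(1)})^2}e_j,$$ and $d^{(3)}:=d^{(2)}/f(d^{(2)},\ell^{(2)})$. Then: (a) $\ell^{(2)}_j\le\max\{\ell_j,L_j\}$, and hence $\ell^{(2)}$ is a certified lower bound with certificate matrix $\Lambda$; (b) $\gamma_j(d^{(1)},\ell^{(1)})>0$ (so $\ell^{(2)}$ and $d^{(2)}$ are well defined); (c) $f(d^{(2)},\ell^{(2)})=\frac{m^2}{m^2-1}$, i.e. $d^{(3)}=\frac{m^2-1}{m^2}\Big(d^{(1)}+\frac{2}{m-1}\frac{1}{\gamma_j(d^{(1)},\ell^{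(1)})^2}e_j\Big)$.
   Context: Standing assumption: $A=[a_1|\cdots|a_m]\in\mathbb{R}^{n\times m}$ has columns of unit Euclidean norm and $\{A\lambda:\lambda\ge0\}=\mathbb{R}^n$ (so $m>n\ge1$); $u\in\mathbb{R}^m$. $D=\mathrm{diag}(d)$; $r(\ell)=\tfrac12(u+\ell)$, $v(\ell)=\tfrac12(u-\ell)$, $B(d)=ADA^\top$, $y(d,\ell)=B(d)^{-1}ADr(\ell)$, $t(d,\ell)=A^\top y(d,\ell)-r(\ell)$, $f(d,\ell)=v(\ell)^\top Dv(\ell)-t(d,\ell)^\top Dt(d,\ell)$, $\gamma_i(d,\ell)=\sqrt{f(d,\ell)a_i^\top B(d)^{-1}a_i}$ when $f(d,\ell)>0$. $\ell$ is a certified lower bound with certificate matrix $\Lambda\in\mathbb{R}^{m\times m}$ if $A\Lambda=-A$, $\Lambda\ge0$, $-\Lambda^\top u\ge\ell$. *)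

From HB Require Import structures.
From mathcomp Require Import all_boot all_order all_algebra.
Set Implicit Arguments. Unset Strict Implicit. Unset Printing Implicit Defensive.
Import Order.TTheory GRing.Theory Num.Theory.
Local Open Scope ring_scope.

Section Defs.
Variables (R : rcfType) (n m : nat).
Implicit Types (A : 'M[R]_(n, m)) (u d l : 'cV[R]_m).

Definition unit_columns A : Prop :=
  forall j : 'I_m, \sum_(i < n) (A i j) ^+ 2 = 1.

Definition positively_spanning A : Prop :=
  forall x : 'cV[R]_n, exists lam : 'cV[R]_m,
    (forall i, 0 <= lam i 0) /\ A *m lam = x.

Definition Dmx d : 'M[R]_m := diag_mx d^T.
Definition rvec u l : 'cV[R]_m := 2^-1 *: (u + l).
Definition vvec u l : 'cV[R]_m := 2^-1 *: (u - l).
Definition Bmx A d : 'M[R]_n := A *m Dmx d *m A^T.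
Definition yvec A u d l : 'cV[R]_n := invmx (Bmx A d) *m A *m Dmx d *m rvec u l.
Definition tvec A u d l : 'cV[R]_m := A^T *m yvec A u d l - rvec u l.
Definition fval A u d l : R :=
  ((vvec u l)^T *m Dmx d *m vvec u l) 0 0
  - ((tvec A u d l)^T *m Dmx d *m tvec A u d l) 0 0.
(* gamma_i(d,l) = sqrt(f(d,l) a_i^T B(d)^{-1} a_i); only used where f(d,l) > 0 *)
Definition gammaj A u d l (i : 'I_m) : R :=
  Num.sqrt (fval A u d l * ((col i A)^T *m invmx (Bmx A d) *m col i A) 0 0).

Definition certified A u l (Lam : 'M[R]_m) : Prop :=
  A *m Lam = - A /\ (forall i k, 0 <= Lam i k) /\
  (forall i, l i 0 <= (- (Lam^T *m u)) i 0).

Definition evec (j : 'I_m) : 'cV[R]_m := delta_mx j 0.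
End Defs.
Arguments evec {R m}.

From HB Require Import structures.
From mathcomp Require Import all_boot all_order all_algebra.
From mathcomp Require Import ring lra.
Import Order.TTheory GRing.Theory Num.Theory.
Local Open Scope ring_scope.

(* f(d,l) is the maximum over y of
     g(d,l,y) = sum_i d_i (a_i^T y - u_i) (l_i - a_i^T y),
   since g(d,l,y) = f(d,l) - |A^T (y - y(d,l))|_D^2; the maximum is attained exactly
   where A^T y = A^T y(d,l).  Changing (d,l) in the single coordinate j changes g
   only through Y = a_j^T y, and by Cauchy-Schwarz the largest value of
   -|A^T w|_D^2 under a_j^T w = t is -t^2/beta, beta = a_j^T B(d)^-1 a_j.  So the
   value of f after such an update is the maximum of an explicit concave quadratic
   in the real variable Y.  For l1 this maximum is 1 - s^2/beta, s = a_j^T y(d,l) - u_j,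
   attained at Y = u_j, so the j-th constraint is tight at (d1,l1); for (d2,l2) the
   maximum is 1 + 1/((m-1)(m+1)) = m^2/(m^2-1).  Part (a) holds because l2_j is a
   convex combination of l1_j <= l_j and u_j - gamma_j(d1,l1) <= L_j. *)

Lemma le_convex_step (R : realFieldType) (x y z K : R) :
  2 <= K -> x <= z -> y <= z -> x + 2 * (y - x) / K <= z.
Proof.
move=> K_ge2 xz yz; have K_gt0 : 0 < K by apply: lt_le_trans K_ge2.
by rewrite -lerBrDl ler_pdivrMr //; nra.
Qed.

Lemma subr_le_sqrt_sqrB (R : rcfType) (g s : R) :
  0 <= s <= g -> g - s <= Num.sqrt (g ^+ 2 - s ^+ 2).
Proof.
case/andP=> s_ge0 sg; have gs_ge0 : 0 <= g - s by rewrite subr_ge0.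
by rewrite -(ger0_norm gs_ge0) -sqrtr_sqr ler_sqrt; nra.
Qed.

Section Objective.
Context {R : rcfType} {n m : nat} (A : 'M[R]_(n, m)) (u : 'cV[R]_m).
Implicit Types (d l : 'cV[R]_m) (x y z w : 'cV[R]_n).

Lemma colT_mulE p (M : 'M[R]_(p, m)) (j : 'I_m) (x : 'cV[R]_p) :
  ((col j M)^T *m x) 0 0 = (M^T *m x) j 0.
Proof. by rewrite tr_col -row_mul mxE. Qed.

Lemma add_evec_at l (c : R) (j : 'I_m) : (l + c *: evec j) j 0 = l j 0 + c.
Proof. by rewrite !mxE !eqxx mulr1. Qed.

Lemma add_evec_off l (c : R) (j i : 'I_m) :
  i != j -> (l + c *: evec j) i 0 = l i 0.
Proof. by move=> ij; rewrite !mxE (negPf ij) mulr0 addr0. Qed.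

Lemma certified_coord_update l l' (Lam : 'M[R]_m) j (c : R) :
  certified A u l Lam -> (forall i, i != j -> l' i 0 = l i 0) ->
  l' j 0 <= Num.max (l j 0) c -> c <= - ((col j Lam)^T *m u) 0 0 ->
  certified A u l' Lam.
Proof.
case=> ALam [Lam_ge0 l_le] l'_off l'j c_le; split=> //; split=> // i.
case: (eqVneq i j) => [->|ij]; last by rewrite l'_off.
apply: le_trans l'j _; rewrite ge_max l_le /=.
by rewrite [X in _ <= X]mxE -colT_mulE.
Qed.

Lemma Dmx_formE d (x z : 'cV[R]_m) :
  (x^T *m Dmx d *m z) 0 0 = \sum_i d i 0 * x i 0 * z i 0.
Proof.
rewrite /Dmx mul_mx_diag mxE; apply: eq_bigr => i _.
by rewrite !mxE (mulrC (x i 0)).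
Qed.

Lemma DmxZ (k : R) d : Dmx (k *: d) = k *: Dmx d.
Proof. by apply/matrixP => i i'; rewrite !mxE mulrnAr. Qed.

Lemma BmxZ (k : R) d : Bmx A (k *: d) = k *: Bmx A d.
Proof. by rewrite /Bmx DmxZ -scalemxAr -scalemxAl. Qed.

Lemma tr_Bmx d : (Bmx A d)^T = Bmx A d.
Proof. by rewrite /Bmx !trmx_mul trmxK /Dmx tr_diag_mx mulmxA. Qed.

Lemma coordT_addZ x z (k : R) i :
  (A^T *m (x + k *: z)) i 0 = (A^T *m x) i 0 + k * (A^T *m z) i 0.
Proof. by rewrite mulmxDr -scalemxAr !mxE. Qed.

Lemma coordT_sub x z i : (A^T *m (x - z)) i 0 = (A^T *m x) i 0 - (A^T *m z) i 0.
Proof. by rewrite mulmxBr !mxE. Qed.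

Definition qform d x z := \sum_i d i 0 * (A^T *m x) i 0 * (A^T *m z) i 0.

Lemma qformE d x z : (x^T *m Bmx A d *m z) 0 0 = qform d x z.
Proof. by rewrite /qform -Dmx_formE /Bmx trmx_mul trmxK !mulmxA. Qed.

Lemma qformZ d (k : R) x : qform d (k *: x) (k *: x) = k ^+ 2 * qform d x x.
Proof.
rewrite /qform mulr_sumr; apply: eq_bigr => i _.
rewrite -!scalemxAr !mxE; ring.
Qed.

Lemma qform_expand d (k : R) x z :
  qform d (x + k *: z) (x + k *: z)
  = qform d x x + 2 * k * qform d z x + k ^+ 2 * qform d z z.
Proof.
rewrite /qform !mulr_sumr -!big_split /=; apply: eq_bigr => i _.
rewrite mulmxDr -scalemxAr !mxE; ring.
Qed.

Section PositiveWeights.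
Context {d : 'cV[R]_m}.
Hypothesis d_gt0 : forall i, 0 < d i 0.

Lemma qform_ge0 x : 0 <= qform d x x.
Proof. by apply: sumr_ge0 => i _; rewrite -mulrA mulr_ge0 ?sqr_ge0 ?ltW. Qed.

Lemma qform_eq0 x : qform d x x = 0 -> A^T *m x = 0.
Proof.
move=> Q0; apply/matrixP => i k; rewrite (ord1 k) [RHS]mxE.
have term_ge0 i' : true -> 0 <= d i' 0 * (A^T *m x) i' 0 * (A^T *m x) i' 0.
  by rewrite -mulrA mulr_ge0 ?sqr_ge0 ?ltW.
move/eqP: (@psumr_eq0P _ _ xpredT _ term_ge0 Q0 i isT).
by rewrite -mulrA mulf_eq0 (gt_eqF (d_gt0 i)) mulf_eq0 orbb => /eqP.
Qed.

(* Positive spanning makes the rows of [A] independent, so [A D A^T] is definite. *)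
Lemma Bmx_unit : positively_spanning A -> Bmx A d \in unitmx.
Proof.
move=> spanA; rewrite -row_free_unit; apply: inj_row_free => v vB0.
have vA0 : v *m A = 0.
  apply: trmx_inj; rewrite trmx_mul trmx0; apply: qform_eq0.
  by rewrite -qformE trmxK vB0 mul0mx mxE.
have [lam [_ Alam]] := spanA v^T.
have vv0 : \sum_i v 0 i ^+ 2 = 0.
  have : (v *m v^T) 0 0 = 0 by rewrite -Alam mulmxA vA0 mul0mx mxE.
  rewrite mxE => vv0; rewrite -[RHS]vv0.
  by apply: eq_bigr => i _; rewrite mxE expr2.
apply/rowP => i; rewrite mxE.
move/eqP: (@psumr_eq0P _ _ xpredT _ (fun k _ => sqr_ge0 (v 0 k)) vv0 i isT).
by rewrite sqrf_eq0 => /eqP.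
Qed.

End PositiveWeights.

Definition coord_term d l (i : 'I_m) (Y : R) := d i 0 * (Y - u i 0) * (l i 0 - Y).
Definition fobj d l y := \sum_i coord_term d l i ((A^T *m y) i 0).

Lemma tvecE d l i :
  tvec A u d l i 0 = (A^T *m yvec A u d l) i 0 - (u i 0 + l i 0) / 2.
Proof. by rewrite !mxE mulrC. Qed.

Lemma vvecE l i : vvec u l i 0 = (u i 0 - l i 0) / 2.
Proof. by rewrite !mxE mulrC. Qed.

Lemma tvec_sub_vvec d l i :
  tvec A u d l i 0 - vvec u l i 0 = (A^T *m yvec A u d l) i 0 - u i 0.
Proof. by rewrite tvecE vvecE; field. Qed.

Lemma ADtvec d l : Bmx A d \in unitmx -> A *m Dmx d *m tvec A u d l = 0.
Proof.
move=> Bunit; rewrite /tvec mulmxBr mulmxA -/(Bmx A d) /yvec.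
by rewrite !mulmxA mulmxV // mul1mx subrr.
Qed.

(* The cross term vanishes because [A D t(d,l) = 0]: [y(d,l)] is the
   stationary point of the concave quadratic [fobj d l]. *)
Lemma fobj_gap d l y : Bmx A d \in unitmx ->
  fobj d l y = fval A u d l - qform d (y - yvec A u d l) (y - yvec A u d l).
Proof.
move=> Bunit; set yc := yvec A u d l; set w := y - yc.
have cross : \sum_i d i 0 * tvec A u d l i 0 * (A^T *m w) i 0 = 0.
  rewrite -Dmx_formE.
  have -> : (tvec A u d l)^T *m Dmx d *m (A^T *m w)
            = (A *m Dmx d *m tvec A u d l)^T *m w.
    by rewrite !trmx_mul /Dmx tr_diag_mx !mulmxA.
  by rewrite ADtvec // trmx0 mul0mx mxE.
rewrite /fval !Dmx_formE /qform /fobj.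
rewrite (eq_bigr (fun i => d i 0 * vvec u l i 0 * vvec u l i 0
   - d i 0 * tvec A u d l i 0 * tvec A u d l i 0
   - d i 0 * (A^T *m w) i 0 * (A^T *m w) i 0
   - 2 * (d i 0 * tvec A u d l i 0 * (A^T *m w) i 0))); last first.
  move=> i _; have -> : (A^T *m w) i 0 = (A^T *m y) i 0 - (A^T *m yc) i 0.
    exact: coordT_sub.
  by rewrite tvecE vvecE /coord_term; field.
by rewrite !sumrB -mulr_sumr cross mulr0 subr0.
Qed.

Lemma fobj_yvec d l : Bmx A d \in unitmx -> fobj d l (yvec A u d l) = fval A u d l.
Proof.
move=> Bunit; rewrite fobj_gap // subrr /qform big1 ?subr0 // => i _.
by rewrite mulmx0 mxE mulr0.
Qed.

Section Maximum.
Context {d l : 'cV[R]_m}.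
Hypotheses (d_gt0 : forall i, 0 < d i 0) (Bunit : Bmx A d \in unitmx).

Lemma fobj_le_fval y : fobj d l y <= fval A u d l.
Proof. by rewrite fobj_gap // lerBlDr lerDl qform_ge0. Qed.

Lemma fobj_eq_fval y :
  fobj d l y = fval A u d l -> A^T *m y = A^T *m yvec A u d l.
Proof.
rewrite fobj_gap // => /eqP; rewrite subr_eq addrC -subr_eq subrr eq_sym => /eqP.
by move/(qform_eq0 d_gt0)/eqP; rewrite mulmxBr subr_eq0 => /eqP.
Qed.

End Maximum.

Lemma fobjZ (k : R) d l y : fobj (k *: d) l y = k * fobj d l y.
Proof.
by rewrite /fobj mulr_sumr; apply: eq_bigr => i _; rewrite /coord_term mxE !mulrA.
Qed.

Lemma yvecZ (k : R) d l : k != 0 -> Bmx A d \in unitmx ->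
  yvec A u (k *: d) l = yvec A u d l.
Proof.
move=> k0 Bunit; rewrite /yvec BmxZ DmxZ invmxZ ?unitmxZ ?unitfE //.
by rewrite -!scalemxAl -[_ *m (k *: _)]scalemxAr -!scalemxAl scalerA mulVf // scale1r.
Qed.

Lemma fvalZ (k : R) d l : k != 0 -> Bmx A d \in unitmx ->
  fval A u (k *: d) l = k * fval A u d l.
Proof.
move=> k0 Bunit; have kBunit : Bmx A (k *: d) \in unitmx.
  by rewrite BmxZ unitmxZ ?unitfE.
by rewrite -fobj_yvec // yvecZ // fobjZ fobj_yvec.
Qed.

Definition betaj d (j : 'I_m) := ((col j A)^T *m invmx (Bmx A d) *m col j A) 0 0.
Definition hvec d (j : 'I_m) := invmx (Bmx A d) *m col j A.

Lemma gammajE d l j : gammaj A u d l j = Num.sqrt (fval A u d l * betaj d j).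
Proof. by []. Qed.

Lemma betajZ (k : R) d j : k != 0 -> Bmx A d \in unitmx ->
  betaj (k *: d) j = k^-1 * betaj d j.
Proof.
move=> k0 Bunit; rewrite /betaj BmxZ invmxZ ?unitmxZ ?unitfE //.
by rewrite -scalemxAr -scalemxAl mxE.
Qed.

Section Hvec.
Context {d : 'cV[R]_m} {j : 'I_m}.
Hypotheses (d_gt0 : forall i, 0 < d i 0) (Bunit : Bmx A d \in unitmx).

Lemma qform_hvec w : qform d (hvec d j) w = (A^T *m w) j 0.
Proof.
rewrite -qformE -colT_mulE; congr ((_ *m _) 0 0).
by rewrite -[Bmx A d]tr_Bmx -trmx_mul /hvec mulmxA mulmxV // mul1mx.
Qed.

Lemma coordT_hvec : (A^T *m hvec d j) j 0 = betaj d j.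
Proof. by rewrite -colT_mulE /hvec mulmxA. Qed.

(* Cauchy-Schwarz for the inner product [qform d], tested against [hvec d j]. *)
Lemma coord_sqr_le_qform w : 0 < betaj d j ->
  (A^T *m w) j 0 ^+ 2 / betaj d j <= qform d w w.
Proof.
move=> beta_gt0; set t := (A^T *m w) j 0.
set w' := w + (- (t / betaj d j)) *: hvec d j.
rewrite -subr_ge0 (_ : _ - _ = qform d w' w'); first exact: qform_ge0.
by rewrite qform_expand !qform_hvec coordT_hvec -/t; field; rewrite lt0r_neq0.
Qed.

End Hvec.

Lemma fobj_coord_update {d l d' l' j} y :
  (forall i, i != j -> d' i 0 = d i 0) -> (forall i, i != j -> l' i 0 = l i 0) ->
  fobj d' l' y = fobj d l y - coord_term d l j ((A^T *m y) j 0)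
                 + coord_term d' l' j ((A^T *m y) j 0).
Proof.
move=> d'_off l'_off; rewrite /fobj (bigD1 j) //= [in RHS](bigD1 j) //=.
rewrite (eq_bigr (fun i => coord_term d l i ((A^T *m y) i 0))); first by ring.
by move=> i ij; rewrite /coord_term d'_off ?l'_off.
Qed.

(* The maximum of [fobj d' l'] over the hyperplane [a_j^T y = Y] when
   [(d', l')] differs from [(d, l)] only in coordinate [j]. *)
Definition update_profile d l d' l' j (Y : R) :=
  fval A u d l - (Y - (A^T *m yvec A u d l) j 0) ^+ 2 / betaj d j
  - coord_term d l j Y + coord_term d' l' j Y.

Section Spanning.
Hypothesis spanA : positively_spanning A.

Section CoordinateUpdate.
Context {d l d' l' : 'cV[R]_m} {j : 'I_m}.
Hypotheses (d_gt0 : forall i, 0 < d i 0) (d'_gt0 : forall i, 0 < d' i 0).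
Hypotheses (d'_off : forall i, i != j -> d' i 0 = d i 0)
           (l'_off : forall i, i != j -> l' i 0 = l i 0).
Hypothesis beta_gt0 : 0 < betaj d j.

Let Bunit := Bmx_unit d_gt0 spanA.
Let Bunit' := Bmx_unit d'_gt0 spanA.

Lemma fobj_update_le y : fobj d' l' y <= update_profile d l d' l' j ((A^T *m y) j 0).
Proof.
rewrite (fobj_coord_update _ d'_off l'_off) /update_profile !lerD2r.
rewrite fobj_gap // lerD2l lerN2.
have := coord_sqr_le_qform d_gt0 Bunit (y - yvec A u d l) beta_gt0.
by rewrite coordT_sub.
Qed.

Lemma fobj_update_attained (Y : R) :
  exists2 y, (A^T *m y) j 0 = Y & fobj d' l' y = update_profile d l d' l' j Y.
Proof.
set yc := yvec A u d l; set tau := (Y - (A^T *m yc) j 0) / betaj d j.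
have beta_neq0 : betaj d j != 0 by rewrite lt0r_neq0.
have AyY : (A^T *m (yc + tau *: hvec d j)) j 0 = Y.
  by rewrite coordT_addZ coordT_hvec // /tau; field.
exists (yc + tau *: hvec d j) => //.
rewrite (fobj_coord_update _ d'_off l'_off) AyY fobj_gap //.
rewrite [_ - yc]addrAC subrr add0r qformZ qform_hvec // coordT_hvec //.
by rewrite /update_profile /tau; congr (_ - _ + _); field.
Qed.

Context {V Y0 : R}.
Hypotheses (profile_le : forall Y, update_profile d l d' l' j Y <= V)
           (profile_at : update_profile d l d' l' j Y0 = V).

Lemma fval_update : fval A u d' l' = V.
Proof.
have [y0 _ fobj_y0] := fobj_update_attained Y0.
apply/eqP; rewrite eq_le -{2}profile_at -fobj_y0 fobj_le_fval // andbT.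
by rewrite -fobj_yvec //; apply: le_trans (fobj_update_le _) (profile_le _).
Qed.

Lemma yvec_update : (A^T *m yvec A u d' l') j 0 = Y0.
Proof.
have [y0 Ay0 fobj_y0] := fobj_update_attained Y0.
by rewrite -Ay0 -(fobj_eq_fval d'_gt0 Bunit' y0) // fobj_y0 profile_at fval_update.
Qed.

End CoordinateUpdate.

Section FirstStep.
Context {d l l1 : 'cV[R]_m} {j : 'I_m} {s : R}.
Hypotheses (d_gt0 : forall i, 0 < d i 0) (fval_eq1 : fval A u d l = 1).
Hypotheses (beta_gt0 : 0 < betaj d j) (Yc_def : (A^T *m yvec A u d l) j 0 = u j 0 + s).
Hypothesis l1_def : l1 = l - (2 * s / (d j 0 * betaj d j)) *: evec j.

Lemma first_profileE Y : update_profile d l d l1 j Y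
  = 1 - s ^+ 2 / betaj d j - (Y - u j 0) ^+ 2 / betaj d j.
Proof.
rewrite /update_profile /coord_term fval_eq1 Yc_def l1_def -scaleNr add_evec_at.
by field; rewrite !lt0r_neq0.
Qed.

Lemma l1_coord_le : 0 <= s -> l1 j 0 <= l j 0.
Proof.
move=> s_ge0; rewrite l1_def -scaleNr add_evec_at gerDl oppr_le0.
by rewrite divr_ge0 ?mulr_ge0 ?ler0n ?(ltW (d_gt0 j)) ?(ltW beta_gt0).
Qed.

Let l1_off i : i != j -> l1 i 0 = l i 0.
Proof. by move=> ij; rewrite l1_def -scaleNr add_evec_off. Qed.

Let first_profile_le Y : update_profile d l d l1 j Y <= 1 - s ^+ 2 / betaj d j.
Proof. by rewrite first_profileE gerBl divr_ge0 ?sqr_ge0 ?ltW. Qed.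

Let first_profile_at : update_profile d l d l1 j (u j 0) = 1 - s ^+ 2 / betaj d j.
Proof. by rewrite first_profileE subrr expr0n mul0r subr0. Qed.

Lemma fval_first_step : fval A u d l1 = 1 - s ^+ 2 / betaj d j.
Proof.
exact: (fval_update d_gt0 d_gt0 _ l1_off beta_gt0 first_profile_le first_profile_at).
Qed.

Lemma yvec_first_step : (A^T *m yvec A u d l1) j 0 = u j 0.
Proof.
exact: (yvec_update d_gt0 d_gt0 _ l1_off beta_gt0 first_profile_le first_profile_at).
Qed.

End FirstStep.

Section SecondStep.
Context {d1 l1 d2 l2 : 'cV[R]_m} {j : 'I_m} {M G : R}.
Hypotheses (d1_gt0 : forall i, 0 < d1 i 0) (fval_eq1 : fval A u d1 l1 = 1).
Hypothesis Yc_tight : (A^T *m yvec A u d1 l1) j 0 = u j 0.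
Hypotheses (M_gt0 : 0 < M) (G_gt0 : 0 < G) (G_sqr : G ^+ 2 = betaj d1 j).
Hypothesis d2_def : d2 = d1 + (2 / M * (G ^+ 2)^-1) *: evec j.
Hypothesis l2_def :
  l2 = l1 + (2 * (u j 0 - l1 j 0 - G) / (M * d1 j 0 * G ^+ 2 + 2)) *: evec j.

(* In [t = Y - u_j] the linear coefficient of the profile is [-2/(M G)],
   independently of [d1_j] and [l1_j]. *)
Lemma second_profileE Y : update_profile d1 l1 d2 l2 j Y
  = (M + 1) ^+ 2 / ((M + 1) ^+ 2 - 1)
    - (M + 2) / (M * G ^+ 2) * (Y - u j 0 + G / (M + 2)) ^+ 2.
Proof.
have K_gt0 : 0 < M * d1 j 0 * G ^+ 2 + 2.
  by rewrite ltr_wpDl ?mulr_ge0 ?ltW ?exprn_gt0.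
have M2_gt0 : 0 < M + 2 by rewrite addr_gt0.
have MM_neq0 : (M + 1) ^+ 2 - 1 != 0.
  by rewrite (_ : _ - 1 = M * (M + 2)); [rewrite mulf_neq0 ?lt0r_neq0 | ring].
rewrite /update_profile /coord_term fval_eq1 Yc_tight -G_sqr d2_def l2_def !add_evec_at.
by field; rewrite MM_neq0 !lt0r_neq0.
Qed.

(* [l2_j] is a convex combination of [l1_j] and [u_j - G]. *)
Lemma l2_coord_le (c : R) : l1 j 0 <= c -> u j 0 - G <= c -> l2 j 0 <= c.
Proof.
move=> l1c uGc; rewrite l2_def add_evec_at (addrAC (u j 0)).
by apply: le_convex_step => //; rewrite lerDr !mulr_ge0 ?ltW.
Qed.

Let d2_gt0 i : 0 < d2 i 0.
Proof.
rewrite d2_def; case: (eqVneq i j) => [->|ij]; last by rewrite add_evec_off.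
by rewrite add_evec_at addr_gt0 ?mulr_gt0 ?invr_gt0 ?exprn_gt0.
Qed.

Let d2_off i : i != j -> d2 i 0 = d1 i 0.
Proof. by move=> ij; rewrite d2_def add_evec_off. Qed.

Let l2_off i : i != j -> l2 i 0 = l1 i 0.
Proof. by move=> ij; rewrite l2_def add_evec_off. Qed.

Lemma fval_second_step : fval A u d2 l2 = (M + 1) ^+ 2 / ((M + 1) ^+ 2 - 1).
Proof.
have beta_gt0 : 0 < betaj d1 j by rewrite -G_sqr exprn_gt0.
apply: (fval_update d1_gt0 d2_gt0 d2_off l2_off beta_gt0 (Y0 := u j 0 - G / (M + 2))).
  move=> Y; rewrite second_profileE gerBl mulr_ge0 ?sqr_ge0 //.
  by rewrite divr_ge0 ?ltW ?addr_gt0 ?mulr_gt0 ?exprn_gt0.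
rewrite second_profileE (_ : _ - _ + _ = 0) ?expr0n ?mulr0 ?subr0 //; ring.
Qed.

End SecondStep.

End Spanning.
End Objective.
Theorem lemma6 (R : rcfType) (n m : nat) (A : 'M[R]_(n, m)) (u : 'cV[R]_m)
  (Hn : (0 < n)%N) (Hnm : (n < m)%N)
  (HA1 : unit_columns A) (HA2 : positively_spanning A)
  (d l : 'cV[R]_m) (Lam : 'M[R]_m) (j : 'I_m)
  (Hd : forall i, 0 < d i 0)
  (Hcert : certified A u l Lam)
  (Hf : fval A u d l = 1)
  (Hj1 : 0 < ((col j A)^T *m yvec A u d l) 0 0 - u j 0)
  (Hj2 : ((col j A)^T *m yvec A u d l) 0 0 - u j 0 <= gammaj A u d l j)
  (Lj : R) (HLj : Lj = ((col j A)^T *m yvec A u d l) 0 0 - gammaj A u d l j)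
  (HLam : Lj <= - ((col j Lam)^T *m u) 0 0)
  (l1 : 'cV[R]_m)
  (Hl1 : l1 = l - ((2 * (tvec A u d l j 0 - vvec u l j 0))
                   / (d j 0 * gammaj A u d l j ^+ 2)) *: evec j)
  (Hf1 : 0 < fval A u d l1)
  (d1 : 'cV[R]_m) (Hd1 : d1 = (fval A u d l1)^-1 *: d)
  (l2 : 'cV[R]_m)
  (Hl2 : l2 = l1 + ((2 * (2 * vvec u l1 j 0 - gammaj A u d1 l1 j))
                    / ((m - 1)%N%:R * d1 j 0 * gammaj A u d1 l1 j ^+ 2 + 2)) *: evec j)
  (d2 : 'cV[R]_m)
  (Hd2 : d2 = d1 + (2 / (m - 1)%N%:R * (gammaj A u d1 l1 j ^+ 2)^-1) *: evec j)
  (d3 : 'cV[R]_m) (Hd3 : d3 = (fval A u d2 l2)^-1 *: d2) :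
  (l2 j 0 <= Num.max (l j 0) Lj /\ certified A u l2 Lam)
  /\ 0 < gammaj A u d1 l1 j
  /\ (fval A u d2 l2 = (m ^ 2)%N%:R / ((m ^ 2)%N%:R - 1)
      /\ d3 = (((m ^ 2)%N%:R - 1) / (m ^ 2)%N%:R)
              *: (d1 + (2 / (m - 1)%N%:R * (gammaj A u d1 l1 j ^+ 2)^-1) *: evec j)).
Proof.
rewrite colT_mulE in Hj1 Hj2 HLj; rewrite gammajE Hf mul1r in Hj2 HLj Hl1.
set s := _ - u j 0 in Hj1 Hj2 HLj; set ga := Num.sqrt _ in Hj2 HLj Hl1.
have ga_gt0 : 0 < ga := lt_le_trans Hj1 Hj2.
have beta_gt0 : 0 < betaj A d j by rewrite -sqrtr_gt0.
have ga_sqr : ga ^+ 2 = betaj A d j by rewrite sqr_sqrtr ?ltW.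
have Yc_def : (A^T *m yvec A u d l) j 0 = u j 0 + s by rewrite addrC subrK.
rewrite tvec_sub_vvec -/s ga_sqr in Hl1.
have f1E := fval_first_step A u HA2 Hd Hf beta_gt0 Yc_def Hl1.
have f1_neq0 : fval A u d l1 != 0 by rewrite lt0r_neq0.
have Bunit := Bmx_unit A Hd HA2.
have d1_gt0 i : 0 < d1 i 0 by rewrite Hd1 mxE mulr_gt0 ?invr_gt0.
have fval_d1 : fval A u d1 l1 = 1 by rewrite Hd1 fvalZ ?invr_eq0 // mulVf.
have tight_d1 : (A^T *m yvec A u d1 l1) j 0 = u j 0.
  by rewrite Hd1 yvecZ ?invr_eq0 // (yvec_first_step A u HA2 Hd Hf beta_gt0 Yc_def Hl1).
have beta1E : betaj A d1 j = fval A u d l1 * betaj A d j.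
  by rewrite Hd1 betajZ ?invr_eq0 ?invrK.
have beta1_gt0 : 0 < betaj A d1 j by rewrite beta1E mulr_gt0.
rewrite gammajE fval_d1 mul1r vvecE in Hl2 Hd2 *.
set G := Num.sqrt (betaj A d1 j) in Hl2 Hd2 *; set M := (m - 1)%:R in Hl2 Hd2 *.
have G_gt0 : 0 < G by rewrite sqrtr_gt0.
have G_sqr : G ^+ 2 = betaj A d1 j by rewrite sqr_sqrtr ?ltW.
have G_ge : ga - s <= G.
  rewrite /G beta1E f1E -ga_sqr (_ : _ * _ = ga ^+ 2 - s ^+ 2).
    by apply: subr_le_sqrt_sqrB; rewrite (ltW Hj1) Hj2.
  by field; rewrite lt0r_neq0.
have M_gt0 : 0 < M by rewrite ltr0n subn_gt0 (leq_ltn_trans Hn Hnm).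
rewrite (_ : 2 * ((u j 0 - l1 j 0) / 2) = u j 0 - l1 j 0) in Hl2; last by field.
have l2_le : l2 j 0 <= Num.max (l j 0) Lj.
  apply: (l2_coord_le u d1_gt0 M_gt0 G_gt0 Hl2); rewrite le_max; apply/orP.
    by left; apply: (l1_coord_le A Hd beta_gt0 Hl1); apply: ltW.
  by right; lra.
have l2_off i : i != j -> l2 i 0 = l i 0.
  by move=> ij; rewrite Hl2 add_evec_off // Hl1 -scaleNr add_evec_off.
have f2E := fval_second_step A u HA2 d1_gt0 fval_d1 tight_d1 M_gt0 G_gt0 G_sqr Hd2 Hl2.
have mE : (m ^ 2)%:R = (M + 1) ^+ 2 :> R.
  by rewrite natr1 subn1 prednK ?natrX // (ltn_trans Hn Hnm).
split; first by split; last exact: certified_coord_update Hcert l2_off l2_le HLam.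
by split=> //; rewrite Hd3 f2E mE Hd2 invf_div.
Qed.
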